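(* There exist a single-item, 2-bidder interdependent-values setting whose valuation profile is $c$-single-crossing for some constant $c\ge1$, and a signal profile $\mathbf s$, such that every auction that allocates the item to a highest-valued bidder and charges the winner $w$ at most $v_w(\mathbf b)$ (her value evaluated at the reported bid profile $\mathbf b$) admits no pure Nash equilibrium at $\mathbf s$ under the no-overbidding assumption.
   Context: Single-item interdependent-values setting: bidders $i\in\{1,\dots,n\}$ have private signals $s_i\in S_i\subseteq\mathbb R_{\ge0}$ (here $S_i$ are intervals); valuations $v_i:S_1\times\dots\times S_n\to\mathbb R_{\ge0}$ are publicly known, weakly increasing in every coordinate and strictly increasing in $s_i$. The profile is $c$-single-crossing ($c\ge1$) if for all bidders $i,i'$, all $\mathbf s$ and all $\delta\ge0$, $c\,(v_i(s_i+\delta,\mathbf s_{-i})-v_i(\mathbf s))\ge v_{i'}(s_i+\delta,\mathbf s_{-i})-v_{i'}(\mathbf s)$. An auction solicits bids (reported signals) $b_i\in S_i$, allocates the item to some bidder in $\arg\max_j v_j(\mathbf b)$ (ties arbitrary), charges the winner $w$ a payment $p_w(\mathbf b)$, and losing bidders pay nothing. Utility: $u_i(\mathbf b;\mathbf s)=x_i(\mathbf b)v_i(\mathbf s)-p_i(\mathbf b)$. A pure Nash equilibrium at $\mathbf s$ under no-overbidding is a bid profile $\mathbf b$ with $b_i\le s_i$ for all $i$ such that no bidder $i$ has a bid $b_i'\in S_i$ with $b_i'\le s_i$ and $u_i((b_i',\mathbf b_{-i});\mathbf s)>u_i(\mathbf b;\mathbf s)$. *)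

From Stdlib Require Import Reals Lra.
Open Scope R_scope.

Inductive bidder : Type := B1 | B2.

Definition bidder_eq_dec (i j : bidder) : {i = j} + {i <> j}.
Proof. decide equality. Defined.

Definition profile := bidder -> R.

Definition upd (s : profile) (i : bidder) (x : R) : profile :=
  fun j => if bidder_eq_dec j i then x else s j.

Definition is_interval (A : R -> Prop) : Prop :=
  (exists x, A x) /\
  (forall x y z, A x -> A z -> x <= y -> y <= z -> A y).

Definition signal_spaces_ok (S : bidder -> R -> Prop) : Prop :=
  forall i, is_interval (S i) /\ (forall x, S i x -> 0 <= x).

Definition in_S (S : bidder -> R -> Prop) (s : profile) : Prop :=
  forall i, S i (s i).

Definition valuations_ok (S : bidder -> R -> Prop) (v : bidder -> profile -> R) : Prop :=
  (forall i s, in_S S s -> 0 <= v i s) /\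
  (forall i j s x, in_S S s -> S j x -> s j <= x -> v i s <= v i (upd s j x)) /\
  (forall i s x, in_S S s -> S i x -> s i < x -> v i s < v i (upd s i x)).

Definition single_crossing (c : R) (S : bidder -> R -> Prop) (v : bidder -> profile -> R) : Prop :=
  forall i i' s d, in_S S s -> 0 <= d -> S i (s i + d) ->
    c * (v i (upd s i (s i + d)) - v i s) >= v i' (upd s i (s i + d)) - v i' s.

(* An auction: allocation rule (the winner) and the winner's payment,
   both functions of the bid profile; losers pay nothing. *)
Definition auction_ok (S : bidder -> R -> Prop) (v : bidder -> profile -> R)
    (win : profile -> bidder) (pay : profile -> R) : Prop :=
  forall b, in_S S b ->
    (forall j, v j b <= v (win b) b) /\ pay b <= v (win b) b.

Definition utility (v : bidder -> profile -> R)
    (win : profile -> bidder) (pay : profile -> R)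
    (i : bidder) (b s : profile) : R :=
  if bidder_eq_dec (win b) i then v i s - pay b else 0.

Definition pure_NE_no_overbidding (S : bidder -> R -> Prop) (v : bidder -> profile -> R)
    (win : profile -> bidder) (pay : profile -> R) (s b : profile) : Prop :=
  in_S S b /\ (forall i, b i <= s i) /\
  (forall i x, S i x -> x <= s i ->
     ~ (utility v win pay i (upd b i x) s > utility v win pay i b s)).

(** Two bidders with signals in [0, 1] and values
    [v_i(s) = 10 + 12 (s_i + s_j) + g (s_i - s_j)] with the cubic [g t = 4 t^3 - t].
    Since [g] is odd, the two values differ by [2 g (s_1 - s_2)], and [g] changes sign
    near [0]: whatever the opponent bids, a bidder can move her bid by [1/4] or [3/4]
    to make [g] favour her.  At the top profile [s = (1, 1)] both values are [34].
    At any equilibrium candidate [b] the loser has utility [0]; deviating as above she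
    becomes the unique highest-valued bidder at bids whose sum is at most [7/4], so she
    pays at most her value there, which is at most [32 < 34]: a strictly profitable
    deviation that respects no-overbidding.  Single crossing holds with [c = 2]: the
    slope of [g] on [-1, 1] lies in [-1, 11], so a bidder's own value grows at rate at
    least [11] in her signal while the other value grows at rate at most [13]. *)

From Stdlib Require Import Reals Lra.
Open Scope R_scope.

Definition other (i : bidder) : bidder := match i with B1 => B2 | B2 => B1 end.

Lemma other_involutive (i : bidder) : other (other i) = i.
Proof. destruct i; reflexivity. Qed.

Lemma other_neq (i : bidder) : other i <> i.
Proof. destruct i; discriminate. Qed.

Lemma bidder_cases (i j : bidder) : j = i \/ j = other i.
Proof. destruct i, j; auto. Qed.

Lemma upd_same (p : profile) (i : bidder) (x : R) : upd p i x i = x.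
Proof. unfold upd; destruct (bidder_eq_dec i i); congruence. Qed.

Lemma upd_other (p : profile) (i : bidder) (x : R) : upd p i x (other i) = p (other i).
Proof.
  unfold upd; destruct (bidder_eq_dec (other i) i) as [E|]; [|reflexivity].
  destruct (other_neq i E).
Qed.

Definition cubic (t : R) : R := 4 * t ^ 3 - t.

Lemma cubic_odd (t : R) : cubic (- t) = - cubic t.
Proof. unfold cubic; ring. Qed.

Lemma cubic_bound (t : R) : -1 <= t <= 1 -> -3 <= cubic t <= 3.
Proof. intros Ht; unfold cubic; assert (0 <= t * t <= 1) by nra; split; nra. Qed.

Lemma cubic_increment (a b : R) :
  -1 <= a <= b -> b <= 1 -> - (b - a) <= cubic b - cubic a <= 11 * (b - a).
Proof.
  intros Ha Hb.
  assert (Hfactor : cubic b - cubic a = (b - a) * (4 * (a * a + a * b + b * b) - 1)).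
  { unfold cubic; ring. }
  assert (0 <= a * a + a * b + b * b <= 3) by nra.
  rewrite Hfactor; split; nra.
Qed.

Lemma overtaking_bid (y : R) :
  0 <= y <= 1 -> exists x, 0 <= x <= 1 /\ x + y <= 7 / 4 /\ 0 < cubic (x - y) <= 1.
Proof.
  intros Hy; destruct (Rle_dec (1 / 4) y).
  - exists (y - 1 / 4); replace (y - 1 / 4 - y) with (- (1 / 4)) by ring.
    unfold cubic; lra.
  - exists (y + 3 / 4); replace (y + 3 / 4 - y) with (3 / 4) by ring.
    unfold cubic; lra.
Qed.

Definition unit_signals (i : bidder) (x : R) : Prop := 0 <= x <= 1.

Definition top : profile := fun _ => 1.

Definition val (i : bidder) (p : profile) : R :=
  10 + 12 * (p i + p (other i)) + cubic (p i - p (other i)).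

Lemma val_other (i : bidder) (p : profile) :
  val (other i) p = 10 + 12 * (p i + p (other i)) - cubic (p i - p (other i)).
Proof.
  unfold val; rewrite other_involutive.
  replace (p (other i) - p i) with (- (p i - p (other i))) by ring.
  rewrite cubic_odd; ring.
Qed.

Lemma val_top (i : bidder) : val i top = 34.
Proof. unfold val, top, cubic; ring. Qed.

Lemma unit_signals_ok : signal_spaces_ok unit_signals.
Proof.
  intros i; unfold unit_signals; split; [split|].
  - exists 0; lra.
  - intros x y z; lra.
  - intros x; lra.
Qed.

Section Increments.

Variable p : profile.
Hypothesis Hp : in_S unit_signals p.
Variables (i : bidder) (x : R).
Hypothesis Hx : unit_signals i x.
Hypothesis Hle : p i <= x.

Lemma val_own_increment : 11 * (x - p i) <= val i (upd p i x) - val i p.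
Proof.
  pose proof (Hp i); pose proof (Hp (other i)); unfold unit_signals in *.
  pose proof (cubic_increment (p i - p (other i)) (x - p (other i))).
  unfold val; rewrite upd_same, upd_other; lra.
Qed.

Lemma val_cross_increment :
  x - p i <= val (other i) (upd p i x) - val (other i) p <= 13 * (x - p i).
Proof.
  pose proof (Hp i); pose proof (Hp (other i)); unfold unit_signals in *.
  pose proof (cubic_increment (p i - p (other i)) (x - p (other i))).
  rewrite !val_other, upd_same, upd_other; lra.
Qed.

End Increments.

Lemma val_ok : valuations_ok unit_signals val.
Proof.
  split; [|split].
  - intros i p Hp; pose proof (Hp i); pose proof (Hp (other i)); unfold unit_signals in *.
    pose proof (cubic_bound (p i - p (other i))); unfold val; lra.
  - intros i j p x Hp Hx Hle.
    destruct (bidder_cases j i) as [-> | ->].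
    + pose proof (val_own_increment p Hp j x Hx Hle); lra.
    + pose proof (val_cross_increment p Hp j x Hx Hle); lra.
  - intros i p x Hp Hx Hlt.
    pose proof (val_own_increment p Hp i x Hx (Rlt_le _ _ Hlt)); lra.
Qed.

Lemma val_single_crossing : single_crossing 2 unit_signals val.
Proof.
  intros i i' p d Hp Hd Hx.
  assert (Hle : p i <= p i + d) by lra.
  pose proof (val_own_increment p Hp i (p i + d) Hx Hle).
  destruct (bidder_cases i i') as [-> | ->]; [lra|].
  pose proof (val_cross_increment p Hp i (p i + d) Hx Hle); lra.
Qed.

Lemma winner_of_strict_max (S : bidder -> R -> Prop) (v : bidder -> profile -> R)
    (win : profile -> bidder) (pay : profile -> R) (b : profile) (i : bidder) :
  auction_ok S v win pay -> in_S S b -> v (other i) b < v i b -> win b = i.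
Proof.
  intros Hok Hb Hlt; destruct (Hok b Hb) as [Hmax _].
  destruct (bidder_cases i (win b)) as [|E]; [assumption|].
  specialize (Hmax i); rewrite E in Hmax; lra.
Qed.

Lemma loser_profitable_deviation (win : profile -> bidder) (pay : profile -> R)
    (b : profile) (l : bidder) :
  auction_ok unit_signals val win pay -> in_S unit_signals b -> win b = other l ->
  exists x, 0 <= x <= 1 /\
    utility val win pay l (upd b l x) top > utility val win pay l b top.
Proof.
  intros Hok Hb Hw.
  destruct (overtaking_bid (b (other l)) (Hb (other l))) as (x & Hx & Hsum & Hcubic).
  exists x; split; [exact Hx|].
  set (b' := upd b l x).
  assert (Hb' : in_S unit_signals b').
  { intros j; destruct (bidder_cases l j) as [-> | ->]; unfold b';
      [rewrite upd_same | rewrite upd_other]; auto. }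
  assert (Hval_l : val l b' = 10 + 12 * (x + b (other l)) + cubic (x - b (other l))).
  { unfold b', val; rewrite upd_same, upd_other; reflexivity. }
  assert (Hval_w : val (other l) b' = 10 + 12 * (x + b (other l)) - cubic (x - b (other l))).
  { unfold b'; rewrite val_other, upd_same, upd_other; reflexivity. }
  assert (Hw' : win b' = l)
    by (apply (winner_of_strict_max unit_signals val win pay); [exact Hok | exact Hb' | lra]).
  assert (Hpay : pay b' <= val l b') by (rewrite <- Hw'; apply (Hok b' Hb')).
  assert (Hlose : utility val win pay l b top = 0).
  { unfold utility; destruct (bidder_eq_dec (win b) l) as [E|]; [|reflexivity].
    rewrite Hw in E; destruct (other_neq l E). }
  rewrite Hlose; fold b'; unfold utility; rewrite Hw', val_top.
  destruct (bidder_eq_dec l l); [lra | congruence].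
Qed.

Theorem mainTheorem3 :
  exists (S : bidder -> R -> Prop) (v : bidder -> profile -> R) (c : R) (s : profile),
    signal_spaces_ok S /\ valuations_ok S v /\ 1 <= c /\ single_crossing c S v /\
    in_S S s /\
    forall (win : profile -> bidder) (pay : profile -> R),
      auction_ok S v win pay ->
      ~ (exists b : profile, pure_NE_no_overbidding S v win pay s b).
Proof.
  exists unit_signals, val, 2, top.
  split; [exact unit_signals_ok|].
  split; [exact val_ok|].
  split; [lra|].
  split; [exact val_single_crossing|].
  split; [intros i; unfold top, unit_signals; lra|].
  intros win pay Hok (b & Hb & _ & Hdev).
  destruct (loser_profitable_deviation win pay b (other (win b)) Hok Hb) as (x & Hx & Hgain).
  { symmetry; apply other_involutive. }
  exact (Hdev _ x Hx (proj2 Hx) Hgain).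
Qed.
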